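(* Let $N\ge1$, let $\mathcal{ZF}_N$ be as in the context, and let $\mathcal B_N$ be the quotient of the free $\Bbbk$-module on symbols $\bar b_0,\dots,\bar b_{N-1}$ by the submodule generated by $\bar b_i-\bar b_{N-1-i}$, $0\le i\le N-1$. Then the assignment $Z^{l,m,k}\mapsto\sum_{j=0}^k\binom kj\bar b_{l+j}$ extends to a well-defined isomorphism of $\Bbbk$-modules $\mathcal{ZF}_N\xrightarrow{\ \sim\ }\mathcal B_N$.
   Context: $\Bbbk$ is a commutative ring. $\mathcal F_N$ is the free $\Bbbk$-module on symbols $F^{l,m,k}$, $l,m,k\ge0$, $l+m+k+1=N$; $\mathcal{ZF}_N:=\mathcal F_N/I$ with $I$ generated by all $F^{l,m,k}-F^{m,l,k}$ and all $F^{l,m+1,k}+F^{l+1,m,k}-F^{l,m,k+1}$; $Z^{l,m,k}$ denotes the image of $F^{l,m,k}$. *)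

From HB Require Import structures.
From mathcomp Require Import all_boot all_order all_algebra.
Set Implicit Arguments. Unset Strict Implicit. Unset Printing Implicit Defensive.
Import GRing.Theory.
Local Open Scope ring_scope.

Definition Trip (N : nat) :=
  {t : 'I_N * 'I_N * 'I_N | (t.1.1 + t.1.2 + t.2 + 1 == N)%N}.
Definition tl N (t : Trip N) : nat := (val t).1.1.
Definition tm N (t : Trip N) : nat := (val t).1.2.
Definition tk N (t : Trip N) : nat := (val t).2.

Section Mods.
Variable R : comPzRingType.
Variable N : nat.

(* F_N : free R-module on the symbols F^{l,m,k}, l+m+k+1 = N. *)
Definition FN := {ffun Trip N -> R^o}.
(* the symbol F^{l,m,k} (zero if l+m+k+1 <> N, i.e. the symbol does not exist) *)
Definition Fsym (l m k : nat) : FN :=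
  [ffun t : Trip N => ((tl t == l) && (tm t == m) && (tk t == k))%:R].

Definition inI (x : FN) : Prop :=
  exists (c1 : Trip N -> R) (c2 : Trip N.-1 -> R),
    x = \sum_(t : Trip N) c1 t *: (Fsym (tl t) (tm t) (tk t) - Fsym (tm t) (tl t) (tk t))
      + \sum_(s : Trip N.-1)
          c2 s *: (Fsym (tl s) (tm s).+1 (tk s) + Fsym (tl s).+1 (tm s) (tk s)
                   - Fsym (tl s) (tm s) (tk s).+1).

Definition BF := {ffun 'I_N -> R^o}.
Definition bsym (i : nat) : BF := [ffun j : 'I_N => (val j == i)%:R].

Definition inJ (y : BF) : Prop :=
  exists c : 'I_N -> R, y = \sum_(i : 'I_N) c i *: (bsym i - bsym (N - 1 - i)%N).

Definition phi_sym (l k : nat) : BF :=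
  \sum_(j < k.+1) ('C(k, j))%:R *: bsym (l + j)%N.

Definition phi (x : FN) : BF := \sum_(t : Trip N) x t *: phi_sym (tl t) (tk t).

End Mods.

From HB Require Import structures.
From mathcomp Require Import all_boot all_order all_algebra zify.
Set Implicit Arguments. Unset Strict Implicit. Unset Printing Implicit Defensive.
Import GRing.Theory.
Local Open Scope ring_scope.

(* The map psi : b_i |-> F^{i,N-1-i,0} satisfies phi (psi y) = y.  The second
   relation F^{l,m,k+1} = F^{l,m+1,k} + F^{l+1,m,k} and Pascal's rule give, by
   induction on k, F^{l,m,k} = sum_j C(k,j) F^{l+j,N-1-l-j,0} = psi (phi F^{l,m,k})
   modulo I.  It remains that phi maps I into J (C(k,j) = C(k,k-j) for the first
   relation, Pascal's rule for the second) and psi maps J into I (b_i - b_{N-1-i}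
   goes to an instance of the first relation). *)

Lemma sum_delta_scale (R : pzRingType) (V : lmodType R) (I : finType) (i0 : I)
    (G : I -> V) :
  \sum_i (i == i0)%:R *: G i = G i0.
Proof.
rewrite (bigD1 i0) //= eqxx scale1r big1 ?addr0 // => i /negbTE ->.
by rewrite scale0r.
Qed.

Lemma sum_binomial_pascal (R : pzRingType) (V : lmodType R) (f : nat -> V) l k :
  \sum_(j < k.+1) 'C(k, j)%:R *: f (l + j)%N
  + \sum_(j < k.+1) 'C(k, j)%:R *: f (l.+1 + j)%N
  = \sum_(j < k.+2) 'C(k.+1, j)%:R *: f (l + j)%N.
Proof.
rewrite [RHS]big_ord_recl.
under [X in _ = _ + X]eq_bigr => i _ do rewrite lift0 binS natrD scalerDl.
rewrite big_split /= addrA; congr (_ + _); last first.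
  by apply: eq_bigr => i _; rewrite addSnnS.
rewrite big_ord_recl [in RHS]big_ord_recr /= (bin_small (ltnSn k)) scale0r addr0.
by rewrite !bin0; congr (_ + _); apply: eq_bigr => i _; rewrite lift0 addnS.
Qed.

Section Span.
Variables (R : pzRingType) (V : lmodType R) (I : finType) (g : I -> V).

Definition spanned (v : V) : Prop := exists c : I -> R, v = \sum_i c i *: g i.

Lemma spanned0 : spanned 0.
Proof. by exists (fun=> 0); rewrite big1 // => i _; rewrite scale0r. Qed.

Lemma spannedD u v : spanned u -> spanned v -> spanned (u + v).
Proof.
move=> [c ->] [d ->]; exists (fun i => c i + d i).
by rewrite -big_split; apply: eq_bigr => i _; rewrite scalerDl.
Qed.

Lemma spannedZ a v : spanned v -> spanned (a *: v).
Proof.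
move=> [c ->]; exists (fun i => a * c i).
by rewrite scaler_sumr; apply: eq_bigr => i _; rewrite scalerA.
Qed.

Lemma spannedB u v : spanned u -> spanned v -> spanned (u - v).
Proof. by move=> su sv; apply: spannedD su _; rewrite -scaleN1r; apply: spannedZ. Qed.

Lemma spanned_sum (J : finType) (F : J -> V) :
  (forall j, spanned (F j)) -> spanned (\sum_j F j).
Proof. by move=> sF; apply: big_ind => //; [exact: spanned0 | exact: spannedD]. Qed.

Lemma spanned_gen i : spanned (g i).
Proof. by exists (fun j => (j == i)%:R); rewrite sum_delta_scale. Qed.

End Span.

Lemma spanned_linear (R : pzRingType) (U W : lmodType R) (I J : finType)
    (g : I -> U) (h : J -> W) (f : {linear U -> W}) v :
  (forall i, spanned h (f (g i))) -> spanned g v -> spanned h (f v).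
Proof.
move=> sfg [c ->]; rewrite linear_sum; apply: spanned_sum => i.
by rewrite linearZ; apply: spannedZ.
Qed.

Lemma trip_ltl N l m k : (l + m + k + 1 == N)%N -> (l < N)%N. Proof. move/eqP; lia. Qed.
Lemma trip_ltm N l m k : (l + m + k + 1 == N)%N -> (m < N)%N. Proof. move/eqP; lia. Qed.
Lemma trip_ltk N l m k : (l + m + k + 1 == N)%N -> (k < N)%N. Proof. move/eqP; lia. Qed.

Definition trip_of N l m k (H : (l + m + k + 1 == N)%N) : Trip N :=
  exist _ (Ordinal (trip_ltl H), Ordinal (trip_ltm H), Ordinal (trip_ltk H)) H.

Section Presentation.
Variables (R : comPzRingType) (N : nat).

Local Notation Fsym := (Fsym R N).
Local Notation bsym := (bsym R N).
Local Notation phi_sym := (phi_sym R N).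

Definition Fbasis (t : Trip N) : FN R N := Fsym (tl t) (tm t) (tk t).

Lemma Fsym_out l m k : (l + m + k + 1 != N)%N -> Fsym l m k = 0.
Proof.
move=> lmkN; apply/ffunP => t; rewrite !ffunE.
case: t => [[[a b] c] /= abcN]; rewrite /tl /tm /tk /=.
by case: eqP => [ea|]; case: eqP => [eb|]; case: eqP => [ec|] //=;
  rewrite -ea -eb -ec abcN in lmkN.
Qed.

Lemma FbasisE (t s : Trip N) : Fbasis t s = (s == t)%:R.
Proof.
case: s t => [[[a b] c] hs] [[[a' b'] c'] ht].
by rewrite ffunE /tl /tm /tk /= -val_eqE /= !xpair_eqE.
Qed.

Lemma FN_expand (x : FN R N) : x = \sum_t x t *: Fbasis t.
Proof.
apply/ffunP => s; rewrite sum_ffunE.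
under eq_bigr => t _ do rewrite ffunE FbasisE eq_sym -[_ *: _]/(_ * _) mulrC.
by rewrite (sum_delta_scale (V := R^o)).
Qed.

Lemma bsym_out n : (N <= n)%N -> bsym n = 0.
Proof.
move=> Nn; apply/ffunP => i; rewrite !ffunE.
by case: eqP => // ein; have := ltn_ord i; rewrite ein ltnNge Nn.
Qed.

Lemma BF_expand (y : BF R N) : y = \sum_i y i *: bsym i.
Proof.
apply/ffunP => s; rewrite sum_ffunE.
under eq_bigr => i _ do rewrite !ffunE val_eqE eq_sym -[_ *: _]/(_ * _) mulrC.
by rewrite (sum_delta_scale (V := R^o)).
Qed.

Lemma phi_is_linear : linear (@phi R N).
Proof.
move=> a x y; rewrite /phi scaler_sumr -big_split; apply: eq_bigr => t _.
by rewrite !ffunE scalerDl scalerA.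
Qed.

HB.instance Definition _ :=
  GRing.isLinear.Build R (FN R N) (BF R N) _ (@phi R N) phi_is_linear.

Lemma phi_Fbasis t : phi (Fbasis t) = phi_sym (tl t) (tk t).
Proof.
rewrite /phi; under eq_bigr => s _ do rewrite FbasisE.
exact: sum_delta_scale.
Qed.

Lemma phi_Fsym l m k :
  phi (Fsym l m k) = (l + m + k + 1 == N)%N%:R *: phi_sym l k.
Proof.
have [lmkN|lmkN] := boolP (l + m + k + 1 == N)%N.
  by rewrite scale1r -(phi_Fbasis (trip_of lmkN)).
by rewrite Fsym_out // linear0 scale0r.
Qed.

Lemma phi_symS l k : phi_sym l k.+1 = phi_sym l k + phi_sym l.+1 k.
Proof. exact: esym (sum_binomial_pascal (fun n => bsym n) l k). Qed.

Definition psi (y : BF R N) : FN R N := \sum_i y i *: Fsym i (N.-1 - i) 0.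

Lemma psi_is_linear : linear psi.
Proof.
move=> a x y; rewrite /psi scaler_sumr -big_split; apply: eq_bigr => i _.
by rewrite !ffunE scalerDl scalerA.
Qed.

HB.instance Definition _ :=
  GRing.isLinear.Build R (BF R N) (FN R N) _ psi psi_is_linear.

Lemma psi_bsym n : psi (bsym n) = Fsym n (N.-1 - n) 0.
Proof.
have [nN|Nn] := ltnP n N; last first.
  by rewrite bsym_out // linear0 Fsym_out //; apply/eqP; lia.
rewrite /psi -(sum_delta_scale (Ordinal nN) (fun i : 'I_N => Fsym i (N.-1 - i) 0)).
by apply: eq_bigr => i _; rewrite ffunE -val_eqE.
Qed.

Lemma phi_psi y : phi (psi y) = y.
Proof.
rewrite /psi [LHS]linear_sum [RHS]BF_expand; apply: eq_bigr => i _.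
rewrite linearZ /= phi_Fsym (_ : _ + _ + 1 == N)%N; last by apply/eqP; have := ltn_ord i; lia.
by rewrite scale1r /phi_sym big_ord1 addn0 scale1r.
Qed.

Definition Igen (u : Trip N + Trip N.-1) : FN R N :=
  match u with
  | inl t => Fsym (tl t) (tm t) (tk t) - Fsym (tm t) (tl t) (tk t)
  | inr s => Fsym (tl s) (tm s).+1 (tk s) + Fsym (tl s).+1 (tm s) (tk s)
             - Fsym (tl s) (tm s) (tk s).+1
  end.

Definition Jgen (i : 'I_N) : BF R N := bsym i - bsym (N - 1 - i).

Lemma inI_spanned x : inI x <-> spanned Igen x.
Proof.
split=> [[c1 [c2 ->]]|[c ->]].
  by exists (fun u => match u with inl t => c1 t | inr s => c2 s end);
    rewrite big_sumType.
by exists (c \o inl), (c \o inr); rewrite big_sumType.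
Qed.

Lemma spanned_swap l m k : spanned Igen (Fsym l m k - Fsym m l k).
Proof.
have [lmkN|lmkN] := boolP (l + m + k + 1 == N)%N.
  exact: (spanned_gen Igen (inl (trip_of lmkN))).
have mlkN : (m + l + k + 1 != N)%N by rewrite (addnC m).
by rewrite !Fsym_out // subr0; apply: spanned0.
Qed.

Lemma spanned_relation l m k :
  spanned Igen (Fsym l m.+1 k + Fsym l.+1 m k - Fsym l m k.+1).
Proof.
have [lmkN|lmkN] := boolP (l + m + k + 1 == N.-1)%N.
  exact: (spanned_gen Igen (inr (trip_of lmkN))).
rewrite !Fsym_out ?addr0 ?subr0; first exact: spanned0.
all: by move: lmkN; apply: contraNN => /eqP <-; apply/eqP; lia.
Qed.

Lemma Fsym_normal_form k l m : (l + m + k + 1 = N)%N ->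
  spanned Igen (Fsym l m k - psi (phi_sym l k)).
Proof.
elim: k l m => [|k IHk] l m lmkN.
  rewrite /phi_sym big_ord1 addn0 scale1r psi_bsym (_ : (N.-1 - l)%N = m); last by lia.
  by rewrite subrr; apply: spanned0.
rewrite phi_symS linearD /=.
have -> : Fsym l m k.+1 - (psi (phi_sym l k) + psi (phi_sym l.+1 k))
  = (Fsym l m.+1 k - psi (phi_sym l k)) + (Fsym l.+1 m k - psi (phi_sym l.+1 k))
    - (Fsym l m.+1 k + Fsym l.+1 m k - Fsym l m k.+1).
  by rewrite addrACA opprB [RHS]addrC addrA subrK opprD.
by apply: spannedB (spanned_relation l m k); apply: spannedD; apply: IHk; lia.
Qed.

Lemma spanned_sub_psi_phi x : spanned Igen (x - psi (phi x)).
Proof.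
have -> : x - psi (phi x) = \sum_t x t *: (Fbasis t - psi (phi (Fbasis t))).
  rewrite [in LHS](FN_expand x) [phi _]linear_sum [psi _]linear_sum -sumrB.
  by apply: eq_bigr => t _; rewrite scalerBr; congr (_ - _); rewrite !linearZ.
apply: spanned_sum => t; apply: spannedZ; rewrite phi_Fbasis.
exact: Fsym_normal_form (eqP (valP t)).
Qed.

Lemma psi_spanned y : spanned Jgen y -> spanned Igen (psi y).
Proof.
apply: spanned_linear => i; have iN := ltn_ord i.
rewrite /Jgen linearB /= !psi_bsym subn1 subKn; last by lia.
exact: spanned_swap.
Qed.

Lemma spanned_phi_sym_swap l m k : (l + m + k + 1 = N)%N ->
  spanned Jgen (phi_sym l k - phi_sym m k).
Proof.
move=> lmkN.
have -> : phi_sym l k = \sum_(j < k.+1) 'C(k, j)%:R *: bsym (N - 1 - (m + j)).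
  rewrite /phi_sym (reindex_inj rev_ord_inj) /=; apply: eq_bigr => j _.
  have jk := ltn_ord j; rewrite subSS bin_sub; last by lia.
  by congr (_ *: bsym _); lia.
rewrite /phi_sym -sumrB; apply: spanned_sum => j.
have mjN : (m + j < N)%N by have := ltn_ord j; lia.
rewrite -scalerBr -opprB scalerN -scaleNr; apply: spannedZ.
exact: (spanned_gen Jgen (Ordinal mjN)).
Qed.

Lemma phi_spanned x : spanned Igen x -> spanned Jgen (phi x).
Proof.
apply: spanned_linear => -[t|s] /=.
  have tN : (tl t + tm t + tk t + 1 == N)%N := valP t.
  rewrite linearB /= !phi_Fsym [(tm t + _)%N]addnC tN !scale1r.
  exact: spanned_phi_sym_swap (eqP tN).
set l := tl s; set m := tm s; set k := tk s.
rewrite linearB linearD /= !phi_Fsym.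
rewrite (_ : l.+1 + m + k + 1 = l + m.+1 + k + 1)%N; last by lia.
rewrite (_ : l + m + k.+1 + 1 = l + m.+1 + k + 1)%N; last by lia.
by rewrite -scalerDr -scalerBr -phi_symS subrr scaler0; apply: spanned0.
Qed.

End Presentation.

Theorem mainTheorem4 (R : comPzRingType) (N : nat) (hN : (1 <= N)%N) :
  (forall x : FN R N, inI x -> inJ (phi x)) /\
  (forall x : FN R N, inJ (phi x) -> inI x) /\
  (forall y : BF R N, exists x : FN R N, inJ (y - phi x)).
Proof.
split; [|split].
- by move=> x /inI_spanned; apply: phi_spanned.
- move=> x xJ; apply/inI_spanned; rewrite -(subrK (psi (phi x)) x).
  exact: spannedD (spanned_sub_psi_phi x) (psi_spanned xJ).
- by move=> y; exists (psi y); rewrite phi_psi subrr; apply: spanned0.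
Qed.
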